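(* Let $(W,S)$ be a finitely generated Coxeter system and $u<v$ in $W$. The number of elements $u'$ covering $u$ in the interval $[u,v]$ equals $|\mathrm{Des}(v^{S(u)})|$.
   Context: $(W,S)$ is a finitely generated Coxeter system with length function $\ell$. For $w\in W$, $S(w)\subseteq S$ is the set of simple reflections appearing in a (any) reduced expression of $w$, and $\mathrm{Des}(w)=\{s\in S:\ell(ws)<\ell(w)\}$. For $I\subseteq S$, $W_I$ is the parabolic subgroup generated by $I$, $X_I=\{u\in W:\ell(us)>\ell(u)\ \forall s\in I\}$, and every $w\in W$ factors uniquely as $w=w^Iw_I$ with $w^I\in X_I$, $w_I\in W_I$ (parabolic components along $I$). The partial order on $W$: $u\le v$ iff $v_{S(u)}=u$. *)

From mathcomp Require Import ssreflect ssrfun ssrbool eqtype ssrnat seq choice fintype finset.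
From Stdlib Require Import ClassicalEpsilon.
From Stdlib Require List.

Set Implicit Arguments.
Unset Strict Implicit.
Unset Printing Implicit Defensive.

Fixpoint gpow (G : Type) (mul : G -> G -> G) (one : G) (x : G) (n : nat) : G :=
  match n with 0 => one | n'.+1 => mul x (gpow mul one x n') end.

Definition is_group (G : Type) (mul : G -> G -> G) (one : G) (inv : G -> G) :=
  [/\ forall x y z, mul x (mul y z) = mul (mul x y) z,
      forall x, mul one x = x, forall x, mul x one = x,
      forall x, mul (inv x) x = one & forall x, mul x (inv x) = one].

(* A finitely generated Coxeter system (W,S): W is a group, S a finite
   index set of generators gen s, m a Coxeter matrix (m s t = 0 encodes
   m(s,t) = infinity), and W is presented by <S | (st)^{m(s,t)} = 1>,
   expressed through generation plus the universal property of the
   presentation. *)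
Record coxeter_system := CoxeterSystem {
  cW : Type;
  cmul : cW -> cW -> cW;
  cone : cW;
  cinv : cW -> cW;
  cW_group : is_group cmul cone cinv;
  cS : finType;
  cgen : cS -> cW;
  cm : cS -> cS -> nat;
  cm_diag : forall s, cm s s = 1;
  cm_sym : forall s t, cm s t = cm t s;
  cm_off : forall s t, s != t -> cm s t != 1;
  crel : forall s t, 0 < cm s t -> gpow cmul cone (cmul (cgen s) (cgen t)) (cm s t) = cone;
  cgenerated : forall w : cW, exists l : seq cS,
      w = foldr (fun s x => cmul (cgen s) x) cone l;
  cuniversal : forall (G : Type) (gm : G -> G -> G) (g1 : G) (gi : G -> G),
      is_group gm g1 gi -> forall f : cS -> G,
      (forall s t, 0 < cm s t -> gpow gm g1 (gm (f s) (f t)) (cm s t) = g1) ->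
      exists h : cW -> G, (forall x y, h (cmul x y) = gm (h x) (h y)) /\
                          (forall s, h (cgen s) = f s)
}.

Section Coxeter.
Variable C : coxeter_system.
Local Notation W := (cW C).
Local Notation S := (cS C).
Local Notation "x * y" := (cmul x y).

Definition wprod (l : seq S) : W := foldr (fun s x => cgen s * x) (cone C) l.

Definition is_length (w : W) (n : nat) : Prop :=
  (exists l : seq S, size l = n /\ wprod l = w) /\
  (forall l : seq S, wprod l = w -> n <= size l).

Definition ell (w : W) : nat := epsilon (inhabits 0) (is_length w).

Definition reduced_expr (w : W) (l : seq S) : Prop := wprod l = w /\ size l = ell w.

Definition supp (w : W) : S -> Prop :=
  fun s => exists l, reduced_expr w l /\ s \in l.

Definition Des (w : W) : {set S} := [set s | ell (w * cgen s) < ell w].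

Definition in_WI (I : S -> Prop) (w : W) : Prop :=
  exists l : seq S, (forall s, s \in l -> I s) /\ wprod l = w.

Definition in_XI (I : S -> Prop) (u : W) : Prop :=
  forall s, I s -> ell u < ell (u * cgen s).

Definition par_decomp (I : S -> Prop) (w : W) (p : W * W) : Prop :=
  [/\ in_XI I p.1, in_WI I p.2 & w = p.1 * p.2].

Definition par_comp (I : S -> Prop) (w : W) : W * W :=
  epsilon (inhabits (cone C, cone C)) (par_decomp I w).

Definition wup (I : S -> Prop) (w : W) : W := (par_comp I w).1.
Definition wlo (I : S -> Prop) (w : W) : W := (par_comp I w).2.

Definition cle (u v : W) : Prop := wlo (supp u) v = u.
Definition clt (u v : W) : Prop := cle u v /\ u <> v.

Definition covers_in (u v u' : W) : Prop :=
  clt u u' /\ cle u' v /\ ~ (exists z, clt u z /\ clt z u').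

End Coxeter.

(* Since [u <= v], [v] factors as [v = v^I u] with [I = S(u)].  For a right descent [s] of
   [v^I], the element [v_(I+s) = (v^I)_(I+s) u] lies strictly above [u] and covers it: an
   element [z] with [u <= z <= v_(I+s)] satisfies [S(u) <= S(z) <= S(u) + s], and it equals [u]
   or [v_(I+s)] according as [s] is missing from [S(z)] or not.  Conversely, a cover [z] of [u]
   in [[u, v]] equals [(v^I)_(S(z)) u], and the last letter [s] of a reduced word of
   [(v^I)_(S(z))] is a descent of [v^I] with [u < v_(I+s) <= z], hence [z = v_(I+s)].  Distinct
   descents give covers with distinct supports.

   The Coxeter combinatorics behind this (exchange and deletion conditions, parabolic
   factorisations and the additivity of length along them) is derived from the presentation
   through Tits' action of [W] on (reflection, sign) pairs.  That distinct simple reflections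
   are distinct elements of [W] comes from the geometric representation, where [(st)^m(s,t)]
   acts trivially because a linear recurrence whose characteristic roots are primitive
   [m(s,t)]-th roots of unity sums to zero over a period. *)

From HB Require Import structures.
From mathcomp Require Import all_boot all_algebra algC cyclotomic ring zify.
From Stdlib Require Import ClassicalEpsilon Classical ProofIrrelevance FunctionalExtensionality.
From Stdlib Require List.

Set Implicit Arguments.
Unset Strict Implicit.
Unset Printing Implicit Defensive.

Import GRing.Theory Num.Theory.

Lemma ex_least (P : nat -> Prop) n : P n -> exists2 m, P m & forall k, P k -> m <= k.
Proof.
elim/ltn_ind: n => n IH Pn.
have [[k Pk lt_kn]|no_smaller] := classic (exists2 k, P k & k < n); first exact: IH Pk.
exists n => // k Pk; rewrite leqNgt; apply/negP => lt_kn; apply: no_smaller; by exists k.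
Qed.

Lemma cat_cons_eq_cat (T : Type) (b c l1 l2 : seq T) t : b ++ t :: c = l1 ++ l2 ->
  (exists b', l1 = b ++ t :: b' /\ c = b' ++ l2) \/ (exists c', l2 = c' ++ t :: c /\ b = l1 ++ c').
Proof.
elim: l1 b => [|y l1 IH] b /= bcE; first by right; exists b.
case: b bcE => [|z b] /= [<- bcE]; first by left; exists l1; rewrite bcE.
case: (IH b bcE) => [[b' [-> ->]]|[c' [-> ->]]]; first by left; exists b'.
by right; exists c'.
Qed.

Lemma in_rconsP (T : eqType) (P : T -> Prop) (l : seq T) x :
  {in rcons l x, forall y, P y} -> {in l, forall y, P y} /\ P x.
Proof. by move=> Plx; split=> [y yl|]; apply: Plx; rewrite mem_rcons inE ?yl ?orbT ?eqxx. Qed.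

Lemma In_mem (T : eqType) (x : T) (s : seq T) : List.In x s <-> x \in s.
Proof.
elim: s => [|y s IH] //=; rewrite inE; split.
  by case=> [->|/IH ->]; rewrite ?eqxx ?orbT.
by case/orP=> [/eqP ->|/IH]; [left|right].
Qed.

Lemma uniq_NoDup (T : eqType) (s : seq T) : uniq s -> List.NoDup s.
Proof.
elim: s => [|y s IH] /=; first by constructor.
by case/andP=> ys us; constructor; [move/In_mem; rewrite (negbTE ys)|exact: IH].
Qed.

Lemma length_size (T : Type) (s : seq T) : List.length s = size s.
Proof. by elim: s => //= x s ->. Qed.

Section Bijections.
Variable T : Type.

Definition bij := {f : (T -> T) * (T -> T) | cancel f.1 f.2 /\ cancel f.2 f.1}.

Definition bij_fun (a : bij) : T -> T := (sval a).1.

Lemma bij_ext (a b : bij) : bij_fun a =1 bij_fun b -> a = b.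
Proof.
case: a b => [[f f'] [/= fK f'K]] [[h h'] [/= hK h'K]].
rewrite /bij_fun /= => /functional_extensionality efh; subst h.
have ef' : f' = h' by apply: functional_extensionality => p; rewrite -{1}(h'K p) fK.
by subst h'; congr exist; apply: proof_irrelevance.
Qed.

Definition bij_mul (a b : bij) : bij.
Proof.
exists ((sval a).1 \o (sval b).1, (sval b).2 \o (sval a).2).
case: a b => [[f f'] [/= fK f'K]] [[h h'] [/= hK h'K]] /=.
by split=> p /=; rewrite ?fK ?hK ?h'K ?f'K.
Defined.

Definition bij_one : bij := exist _ (id, id) (conj (fun _ => erefl) (fun _ => erefl)).

Definition bij_inv (a : bij) : bij :=
  exist _ ((sval a).2, (sval a).1) (conj (proj2 (svalP a)) (proj1 (svalP a))).

Lemma bij_group : is_group bij_mul bij_one bij_inv.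
Proof.
split=> [a b c|a|a|a|a]; apply: bij_ext => p //;
  by case: a => [[f f'] [/= fK f'K]]; rewrite /bij_fun /=.
Qed.

Lemma bij_fun_pow (a : bij) k : bij_fun (gpow bij_mul bij_one a k) =1 iter k (bij_fun a).
Proof. by move=> p; elim: k => //= k <-. Qed.

Definition bij_of_invol (f : T -> T) (fK : involutive f) : bij :=
  exist _ (f, f) (conj fK fK).

End Bijections.

Lemma coxeter_action (C : coxeter_system) (T : Type) (f : cS C -> T -> T) :
  (forall s, involutive (f s)) ->
  (forall s t, 0 < cm s t -> forall p, iter (cm s t) (f s \o f t) p = p) ->
  exists act : cW C -> T -> T,
    [/\ forall x y p, act (cmul x y) p = act x (act y p),
        forall s p, act (cgen s) p = f s p & forall p, act (cone C) p = p].
Proof.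
move=> fK frel.
have [|h [hM hg]] := cuniversal (bij_group T) (f := fun s => bij_of_invol (fK s)).
  by move=> s t /frel st; apply: bij_ext => p; rewrite bij_fun_pow.
exists (fun w => bij_fun (h w)); split=> [x y p|s p|p]; rewrite ?hM ?hg //.
set e := h (cone C).
have ee : bij_mul e e = e by rewrite -hM; case: (cW_group C) => _ ->.
have eK : bij_fun e ((sval e).2 p) = p by case: (svalP e) => _; apply.
by rewrite -[in LHS]eK -[bij_fun e (bij_fun e _)]/(bij_fun (bij_mul e e) _) ee eK.
Qed.

Section SecondOrderRecurrence.
Variables (F : fieldType) (m : nat) (y : nat -> F).
Local Open Scope ring_scope.

(* [y (k+1) - mu y k] is geometric of ratio [nu], hence sums to 0 over a period. *)
Lemma recurrence_telescope (mu nu : F) :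
  mu * nu = 1 -> nu ^+ m = 1 -> nu != 1 ->
  (forall k, y k.+2 = (mu + nu) * y k.+1 - y k) ->
  (1 - mu) * \sum_(0 <= k < m) y k + (y m - y 0%N) = 0.
Proof.
move=> munu num nu1 rec.
have z_geom k : y k.+1 - mu * y k = nu ^+ k * (y 1%N - mu * y 0%N).
  elim: k => [|k IH]; first by rewrite expr0 mul1r.
  rewrite rec exprS -mulrA -IH.
  transitivity (nu * y k.+1 - mu * nu * y k); last by ring.
  by rewrite munu mul1r; ring.
have sum_z : \sum_(0 <= k < m) (y k.+1 - mu * y k) = 0.
  under eq_bigr do rewrite z_geom.
  rewrite -mulr_suml big_mkord.
  have /eqP : (nu - 1) * \sum_(k < m) nu ^+ k = 0 by rewrite -subrX1 num subrr.
  by rewrite mulf_eq0 subr_eq0 (negbTE nu1) => /eqP ->; rewrite mul0r.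
have shift : \sum_(0 <= k < m) y k.+1 = \sum_(0 <= k < m) y k - y 0%N + y m.
  by apply: (addrI (y 0%N)); rewrite -big_nat_recl // big_nat_recr //=; ring.
by rewrite -[RHS]sum_z sumrB -mulr_sumr shift; ring.
Qed.

Lemma recurrence_sum_eq0 (l : F) : l ^+ m = 1 -> l ^+ 2 != 1 ->
  (forall k, y k.+2 = (l + l^-1) * y k.+1 - y k) -> \sum_(0 <= k < m) y k = 0.
Proof.
move=> lm l2 rec; have [->|m_gt0] := posnP m; first by rewrite big_geq.
have l0 : l != 0.
  by apply/eqP=> l_0; move: lm; rewrite l_0 expr0n eqn0Ngt m_gt0 => /esym/eqP; rewrite oner_eq0.
have l1 : l != 1 by move: l2; apply: contra_neq => ->; rewrite expr1n.
have lVm : l^-1 ^+ m = 1 by rewrite exprVn lm invr1.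
have lV1 : l^-1 != 1 by rewrite invr_eq1.
have rec' k : y k.+2 = (l^-1 + l) * y k.+1 - y k by rewrite rec (addrC l).
have h1 := recurrence_telescope (mulfV l0) lVm lV1 rec.
have h2 := recurrence_telescope (mulVf l0) lm l1 rec'.
set s := \sum_(0 <= k < m) y k in h1 h2 *.
have : (l^-1 - l) * s = ((1 - l) * s + (y m - y 0%N)) - ((1 - l^-1) * s + (y m - y 0%N)).
  by ring.
rewrite h1 h2 subrr => /eqP; rewrite mulf_eq0 subr_eq0 => /orP [/eqP lVl|/eqP //].
by move: l2; rewrite expr2 -{1}lVl mulVf ?eqxx.
Qed.

End SecondOrderRecurrence.

Section GeometricRepresentation.
Variable C : coxeter_system.
Local Notation S := (cS C).
Local Open Scope ring_scope.

Definition prim_root (m : nat) : algC :=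
  if m is m'.+1 then sval (C_prim_root_exists (ltn0Sn m')) else 1.

Lemma prim_rootP m : (0 < m)%N -> m.-primitive_root (prim_root m).
Proof. by case: m => // m _ /=; case: (C_prim_root_exists _). Qed.

(* [cos (pi / m)], with the value 1 for [m = 0] (the infinite order case). *)
Definition cos_pi (m : nat) : algC := sqrtC (prim_root m + (prim_root m)^-1 + 2) / 2.

Lemma cos_pi_sq m : 4 * cos_pi m ^+ 2 - 2 = prim_root m + (prim_root m)^-1.
Proof.
rewrite /cos_pi expr_div_n sqrtCK.
have -> : (2 : algC) ^+ 2 = 4 by rewrite expr2 -natrM.
by rewrite mulrC divfK ?pnatr_eq0 // addrK.
Qed.

Lemma cos_pi2 : cos_pi 2 = 0.
Proof.
have := prim_rootP (isT : (0 < 2)%N); set l := prim_root 2 => l_prim.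
have l1 : l != 1.
  by apply/eqP=> l_1; have := prim_order_dvd l_prim 1; rewrite l_1 expr1n eqxx.
have l_opp1 : l = -1.
  apply/eqP; have : (l - 1) * (l + 1) = l ^+ 2 - 1 by ring.
  by rewrite (prim_expr_order l_prim) subrr => /eqP; rewrite mulf_eq0 subr_eq0 (negbTE l1) addr_eq0.
rewrite /cos_pi -/l l_opp1 invrN1 (_ : -1 + -1 + 2 = 0 :> algC); last by ring.
by rewrite sqrtC0 mul0r.
Qed.

Definition coxeter_form (s t : S) : algC := if s == t then 1 else - cos_pi (cm s t).

Definition basis_vec (s : S) : S -> algC := fun r => (r == s)%:R.

Definition form_at (s : S) (v : S -> algC) : algC := \sum_r coxeter_form s r * v r.

Definition geom_refl (s : S) (v : S -> algC) : S -> algC :=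
  fun r => v r - 2 * form_at s v * basis_vec s r.

Lemma coxeter_form_sym s t : coxeter_form s t = coxeter_form t s.
Proof. by rewrite /coxeter_form eq_sym cm_sym. Qed.

Lemma coxeter_form_diag s : coxeter_form s s = 1.
Proof. by rewrite /coxeter_form eqxx. Qed.

Lemma form_at_basis s t : form_at s (basis_vec t) = coxeter_form s t.
Proof.
rewrite /form_at (bigD1 t) //= big1 => [|r /negbTE rt]; last by rewrite /basis_vec rt mulr0.
by rewrite /basis_vec eqxx mulr1 addr0.
Qed.

Lemma form_at_sub s v a t :
  form_at s (fun r => v r - a * basis_vec t r) = form_at s v - a * coxeter_form s t.
Proof.
rewrite -form_at_basis /form_at mulr_sumr -sumrB.
by apply: eq_bigr => r _; ring.
Qed.

Lemma form_at_refl s' s v :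
  form_at s' (geom_refl s v) = form_at s' v - 2 * form_at s v * coxeter_form s' s.
Proof. exact: form_at_sub. Qed.

Lemma geom_refl_invol s : involutive (geom_refl s).
Proof.
move=> v; apply: functional_extensionality => r.
by rewrite {1}/geom_refl form_at_refl coxeter_form_diag /geom_refl; ring.
Qed.

Section Braid.
Variables s t : S.
Hypotheses (st : s != t) (m_gt1 : (1 < cm s t)%N).
Local Notation c := (cos_pi (cm s t)).
Local Notation rot := (geom_refl s \o geom_refl t).

Lemma coxeter_form_st : coxeter_form s t = - c.
Proof. by rewrite /coxeter_form (negbTE st). Qed.

Lemma coxeter_form_ts : coxeter_form t s = - c.
Proof. by rewrite coxeter_form_sym coxeter_form_st. Qed.

Variable v : S -> algC.
Let a k := form_at s (iter k rot v).
Let b k := form_at t (iter k rot v).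

Lemma a_succ k : a k.+1 = - a k - 2 * c * b k.
Proof.
rewrite /a /b iterS /= !form_at_refl !coxeter_form_diag coxeter_form_st; ring.
Qed.

Lemma b_succ k : b k.+1 = 2 * c * a k + (4 * c ^+ 2 - 1) * b k.
Proof.
rewrite /a /b iterS /= !form_at_refl coxeter_form_diag coxeter_form_st coxeter_form_ts; ring.
Qed.

Lemma a_rec k : a k.+2 = (4 * c ^+ 2 - 2) * a k.+1 - a k.
Proof. rewrite [a k.+2]a_succ b_succ [a k.+1]a_succ; ring. Qed.

Lemma b_rec k : b k.+2 = (4 * c ^+ 2 - 2) * b k.+1 - b k.
Proof. rewrite [b k.+2]b_succ a_succ [b k.+1]b_succ; ring. Qed.

Lemma iter_rot k r : iter k rot v r =
  v r - 2 * (\sum_(0 <= j < k) (a j + 2 * c * b j)) * basis_vec s r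
      - 2 * (\sum_(0 <= j < k) b j) * basis_vec t r.
Proof.
elim: k => [|k IH]; first by rewrite !big_geq //= !mulr0 !mul0r !subr0.
rewrite !big_nat_recr //= {1}/geom_refl /geom_refl.
rewrite -/(iter k rot v) IH form_at_refl -/(a k) -/(b k) coxeter_form_st.
ring.
Qed.

Lemma rot_order : iter (cm s t) rot v = v.
Proof.
have [a0 b0] : \sum_(0 <= k < cm s t) a k = 0 /\ \sum_(0 <= k < cm s t) b k = 0.
  have [m2|m_gt2] := eqVneq (cm s t) 2%N.
    by rewrite m2 !big_nat_recr //= !big_geq // a_succ b_succ m2 cos_pi2; split; ring.
  have m_gt2' : (2 < cm s t)%N by rewrite ltn_neqAle eq_sym m_gt2.
  have l_prim := prim_rootP (ltnW (ltnW m_gt2')).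
  have l2 : prim_root (cm s t) ^+ 2 != 1.
    by rewrite -(prim_order_dvd l_prim) gtnNdvd.
  have rec (y : nat -> algC) : (forall k, y k.+2 = (4 * c ^+ 2 - 2) * y k.+1 - y k) ->
      \sum_(0 <= k < cm s t) y k = 0.
    by rewrite cos_pi_sq; apply: recurrence_sum_eq0 (prim_expr_order l_prim) l2.
  by split; apply: rec; [exact: a_rec|exact: b_rec].
apply: functional_extensionality => r; rewrite iter_rot big_split /= -mulr_sumr a0 b0; ring.
Qed.

End Braid.

Lemma geom_refl_braid s t : (0 < cm s t)%N ->
  forall v, iter (cm s t) (geom_refl s \o geom_refl t) v = v.
Proof.
move=> m_gt0 v; have [<-|st] := eqVneq s t; first by rewrite cm_diag /= geom_refl_invol.
by apply: rot_order; rewrite // ltn_neqAle eq_sym cm_off.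
Qed.

(* [geom_refl s] negates [e_s], whereas [geom_refl t] does not change its [s]-coordinate. *)
Lemma cgen_inj : injective (@cgen C).
Proof.
move=> s t gst; apply/eqP; apply: contraT => st.
have [act [_ act_g _]] := coxeter_action geom_refl_invol geom_refl_braid.
have := act_g s (basis_vec s); rewrite gst act_g => /(congr1 (fun v => v s)).
rewrite /geom_refl !form_at_basis /basis_vec coxeter_form_diag eqxx (negbTE st) !mulr0 subr0 !mulr1 => /eqP.
by rewrite eq_sym subr_eq addrC -subr_eq subrr eq_sym pnatr_eq0.
Qed.

End GeometricRepresentation.

Section CoxeterGroup.
Variable C : coxeter_system.
Local Notation W := (cW C).
Local Notation S := (cS C).
Local Notation "x * y" := (@cmul C x y).
Local Notation one := (cone C).
Local Notation inv := (@cinv C).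
Local Notation g := (@cgen C).

Lemma mulwA x y z : x * (y * z) = x * y * z.   Proof. by case: (cW_group C). Qed.
Lemma mul1w x : one * x = x.                   Proof. by case: (cW_group C). Qed.
Lemma mulw1 x : x * one = x.                   Proof. by case: (cW_group C). Qed.
Lemma mulVw x : inv x * x = one.               Proof. by case: (cW_group C). Qed.
Lemma mulwV x : x * inv x = one.               Proof. by case: (cW_group C). Qed.
Lemma mulKw x y : inv x * (x * y) = y.         Proof. by rewrite mulwA mulVw mul1w. Qed.
Lemma mulwK x y : x * y * inv y = x.           Proof. by rewrite -mulwA mulwV mulw1. Qed.
Lemma mulwVK x y : x * inv y * y = x.          Proof. by rewrite -mulwA mulVw mulw1. Qed.
Lemma mulwI x : injective (@cmul C x).
Proof. by move=> y z yz; rewrite -(mulKw x y) yz mulKw. Qed.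
Lemma invw_eq x y : x * y = one -> inv x = y.
Proof. by move=> xy; apply: (@mulwI x); rewrite mulwV xy. Qed.
Lemma invwM x y : inv (x * y) = inv y * inv x.
Proof. by apply: invw_eq; rewrite mulwA mulwK mulwV. Qed.
Lemma invw1 : inv one = one.  Proof. by apply: invw_eq; rewrite mulw1. Qed.

Lemma gen_sq s : g s * g s = one.
Proof. by have := @crel C s s; rewrite cm_diag /= mulw1; apply. Qed.

Lemma invw_gen s : inv (g s) = g s.
Proof. by apply: invw_eq; rewrite gen_sq. Qed.

Lemma conj_genK s x : g s * (g s * x * g s) * g s = x.
Proof. by rewrite !mulwA gen_sq mul1w -mulwA gen_sq mulw1. Qed.

Lemma conj_gen_inj s : injective (fun x => g s * x * g s).
Proof. by move=> x y /(congr1 (fun z => g s * z * g s)); rewrite !conj_genK. Qed.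

Lemma conj_gen_id s : g s * g s * g s = g s.
Proof. by rewrite gen_sq mul1w. Qed.

Definition eqw (x y : W) : bool := if excluded_middle_informative (x = y) then true else false.

Lemma eqwP : Equality.axiom eqw.
Proof. by move=> x y; rewrite /eqw; case: excluded_middle_informative => xy; constructor. Qed.

HB.instance Definition _ := hasDecEq.Build W eqwP.

Lemma conj_genE s (x y : W) : (g s * x * g s == y) = (x == g s * y * g s).
Proof. by apply/eqP/eqP=> [<-|->]; rewrite conj_genK. Qed.

(** * Words and length *)

Lemma wprod_cons s (l : seq S) : wprod (s :: l) = g s * wprod l.  Proof. by []. Qed.

Lemma wprod_cat (l1 l2 : seq S) : wprod (l1 ++ l2) = wprod l1 * wprod l2.
Proof. by elim: l1 => [|s l IH] /=; rewrite ?mul1w // IH mulwA. Qed.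

Lemma wprod_rcons (l : seq S) s : wprod (rcons l s) = wprod l * g s.
Proof. by rewrite -cats1 wprod_cat /= mulw1. Qed.

Lemma wprod_rev (l : seq S) : wprod (rev l) = inv (wprod l).
Proof.
elim: l => [|s l IH]; first by rewrite /= invw1.
by rewrite rev_cons wprod_rcons IH wprod_cons invwM invw_gen.
Qed.

Definition reduced (l : seq S) : Prop := size l = ell (wprod l).

Lemma ell_spec (w : W) : is_length w (ell w).
Proof.
rewrite /ell; apply: epsilon_spec; have [l wl] := cgenerated w.
have [n [l' [szl' wl']] n_min] :=
  @ex_least (fun n => exists l', size l' = n /\ wprod l' = w) (size l) (ex_intro _ l (conj erefl (esym wl))).
by exists n; split=> [|l'' wl'']; [exists l'|apply: n_min; exists l''].
Qed.

Lemma reduced_expr_exists (w : W) : exists l, reduced_expr w l.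
Proof. by have [[l [szl wl]] _] := ell_spec w; exists l. Qed.

Lemma ell_wprod (l : seq S) : ell (wprod l) <= size l.
Proof. by case: (ell_spec (wprod l)) => _; apply. Qed.

Lemma ell1 : ell one = 0.
Proof. by apply/eqP; rewrite -leqn0 (ell_wprod [::]). Qed.

Lemma ell_eq0 (w : W) : ell w = 0 -> w = one.
Proof. by have [[|s l] [<- /= <-]] := reduced_expr_exists w. Qed.

Lemma ell_mul (x y : W) : ell (x * y) <= ell x + ell y.
Proof.
have [lx [<- <-]] := reduced_expr_exists x; have [ly [<- <-]] := reduced_expr_exists y.
by rewrite -wprod_cat -size_cat ell_wprod.
Qed.

Lemma ell_inv (w : W) : ell (inv w) = ell w.
Proof.
have ell_invw x : ell (inv x) <= ell x.
  by have [l [<- <-]] := reduced_expr_exists x; rewrite -wprod_rev -size_rev ell_wprod.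
by apply/eqP; rewrite eqn_leq ell_invw -{1}(invw_eq (mulVw w)) ell_invw.
Qed.

Lemma reduced_cat (l1 l2 : seq S) : reduced (l1 ++ l2) -> reduced l1 /\ reduced l2.
Proof.
rewrite /reduced wprod_cat size_cat => red.
have := ell_mul (wprod l1) (wprod l2); rewrite -red.
by have := ell_wprod l1; have := ell_wprod l2; lia.
Qed.

Lemma odd_ell_mulg (w : W) s : odd (ell (w * g s)) = ~~ odd (ell w).
Proof.
have negb_braid (s' t : S) (_ : 0 < cm s' t) b : iter (cm s' t) (negb \o negb) b = b.
  by elim: (cm s' t) => //= n ->; rewrite negbK.
have [act [actM act_gen act1]] := coxeter_action (fun _ => negbK) negb_braid.
have act_word l b : act (wprod l) b = odd (size l) (+) b.
  by elim: l => [|s' l IH]; rewrite ?act1 // wprod_cons actM act_gen IH /= addNb.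
have act_ell x b : act x b = odd (ell x) (+) b.
  by have [l [<- <-]] := reduced_expr_exists x; exact: act_word.
by have := act_ell (w * g s) false; rewrite actM act_gen !act_ell addbT addbF.
Qed.

Lemma ell_mulg (w : W) s : ell (w * g s) = (ell w).+1 \/ ell w = (ell (w * g s)).+1.
Proof.
have ell_g : ell (g s) <= 1 by rewrite -[g s]mulw1 (ell_wprod [:: s]).
have up : ell (w * g s) <= (ell w).+1 by rewrite -addn1 (leq_trans (ell_mul _ _)) ?leq_add2l.
have down : ell w <= (ell (w * g s)).+1.
  rewrite -addn1 -{1}[w]mulw1 -(gen_sq s) mulwA.
  by rewrite (leq_trans (ell_mul _ _)) ?leq_add2l.
have := odd_ell_mulg w s.
case: (ltngtP (ell (w * g s)) (ell w)) => [lt|gt|->]; last by case: (odd _).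
- by right; apply/eqP; rewrite eqn_leq down lt.
- by left; apply/eqP; rewrite eqn_leq up gt.
Qed.

Lemma ell_gen s : ell (g s) = 1.
Proof. by case: (ell_mulg one s); rewrite mul1w ell1. Qed.

Lemma ell_mulg_ltgt (w : W) s : ell (w * g s) < ell w \/ ell w < ell (w * g s).
Proof. by case: (ell_mulg w s) => ->; [right|left]. Qed.

Lemma reduced_rcons_exists (w : W) : w <> one -> exists l s, reduced_expr w (rcons l s).
Proof.
move=> w1; have [l red] := reduced_expr_exists w.
by case/lastP: l red => [[/= wE _]|l s red]; [case: w1; rewrite -wE|exists l, s].
Qed.

Lemma ell_rcons_lt (l : seq S) s : reduced (rcons l s) ->
  ell (wprod (rcons l s) * g s) < ell (wprod (rcons l s)).
Proof.
move=> red; rewrite -red wprod_rcons -mulwA gen_sq mulw1 size_rcons ltnS.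
exact: ell_wprod.
Qed.

(** * The reflection representation and the exchange condition *)

(* Tits' action of [s] on pairs (reflection, sign). *)
Definition refl_pair s (p : W * bool) : W * bool := (g s * p.1 * g s, p.2 (+) (p.1 == g s)).

Lemma refl_pair_invol s : involutive (refl_pair s).
Proof.
by case=> r e; rewrite /refl_pair /= conj_genK conj_genE conj_gen_id -addbA addbb addbF.
Qed.

Fixpoint odd_hits (r : W) (z : nat -> W) (n : nat) : bool :=
  if n is n'.+1 then odd_hits r z n' (+) (r == z n') else false.

Lemma odd_hits_period (r : W) z m : (forall i, z (m + i) = z i) -> odd_hits r z (m + m) = false.
Proof.
move=> zm; suff odd_hitsD n : odd_hits r z (m + n) = odd_hits r z m (+) odd_hits r z n.
  by rewrite odd_hitsD addbb.
by elim: n => [|n IH]; rewrite ?addn0 ?addbF // addnS /= IH zm addbA.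
Qed.

Lemma gpowSr (x : W) k : gpow (@cmul C) one x k.+1 = gpow (@cmul C) one x k * x.
Proof.
elim: k => [|k IH] /=; first by rewrite mulw1 mul1w.
by move: IH => /= IH; rewrite {1}IH mulwA.
Qed.

Lemma gpowC (x : W) k : x * gpow (@cmul C) one x k = gpow (@cmul C) one x k * x.
Proof. exact: gpowSr. Qed.

Lemma gpowD (x : W) k1 k2 :
  gpow (@cmul C) one x (k1 + k2) = gpow (@cmul C) one x k1 * gpow (@cmul C) one x k2.
Proof. by elim: k1 => [|k IH] /=; rewrite ?mul1w // IH mulwA. Qed.

Section ReflectionBraid.
Variables s t : S.
Hypothesis m_gt0 : 0 < cm s t.
Local Notation A k := (gpow (@cmul C) one (g s * g t) k).
Local Notation B k := (gpow (@cmul C) one (g t * g s) k).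

Lemma mulAB k : A k * B k = one.
Proof.
elim: k => [|k IH]; first by rewrite /= mulw1.
by rewrite gpowSr [B k.+1]/= -!mulwA (mulwA (g t) (g t)) gen_sq mul1w
  (mulwA (g s) (g s)) gen_sq mul1w IH.
Qed.

Lemma mulBA k : B k * A k = one.
Proof.
elim: k => [|k IH]; first by rewrite /= mulw1.
by rewrite gpowSr [A k.+1]/= -!mulwA (mulwA (g s) (g s)) gen_sq mul1w
  (mulwA (g t) (g t)) gen_sq mul1w IH.
Qed.

Lemma conj_braid_eq k r y : (A k * r * B k == y) = (r == B k * y * A k).
Proof.
apply/eqP/eqP=> [<-|->].
  by rewrite !mulwA mulBA mul1w -mulwA mulBA mulw1.
by rewrite !mulwA mulAB mul1w -mulwA mulAB mulw1.
Qed.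

Lemma gen_mulA k : g t * A k = B k * g t.
Proof. by elim: k => [|k IH] /=; rewrite ?mulw1 ?mul1w // -!mulwA IH !mulwA. Qed.

(* The reflections [t, tst, tstst, ...] crossed by the word [tsts...]. *)
Definition braid_refl (i : nat) : W := B i * g t.

Lemma refl_pair_iter k r e :
  iter k (refl_pair s \o refl_pair t) (r, e) = (A k * r * B k, e (+) odd_hits r braid_refl (k + k)).
Proof.
elim: k => [|k IH]; first by rewrite /= mul1w mulw1 addbF.
rewrite iterS IH /refl_pair /= addnS /= -!addbA.
congr (_, _ (+) (_ (+) (_ (+) _))).
- by rewrite (gpowC (g t * g s)) !mulwA.
- by rewrite conj_braid_eq /braid_refl gpowD -(mulwA (B k)) gen_mulA mulwA.
have -> : braid_refl (k + k).+1 = B k * (g t * g s * g t) * A k.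
  by rewrite /braid_refl -addnS gpowD [B k.+1]/= -!mulwA gen_mulA.
by rewrite conj_genE conj_braid_eq.
Qed.

Lemma refl_pair_braid p : iter (cm s t) (refl_pair s \o refl_pair t) p = p.
Proof.
have Am : A (cm s t) = one := crel m_gt0.
have Bm : B (cm s t) = one by rewrite cm_sym; apply: crel; rewrite cm_sym.
case: p => r e; rewrite refl_pair_iter Am Bm mul1w mulw1 odd_hits_period ?addbF // => i.
by rewrite /braid_refl gpowD Bm mul1w.
Qed.

End ReflectionBraid.

Lemma conjE (x y : W) : x * y = y * (inv y * x * y).
Proof. by rewrite !mulwA mulwV mul1w. Qed.

Fixpoint reflections (l : seq S) : seq W :=
  if l is s :: l' then inv (wprod l') * g s * wprod l' :: reflections l' else [::].

Lemma size_reflections l : size (reflections l) = size l.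
Proof. by elim: l => //= s l ->. Qed.

Lemma reflections_split (x : W) l : x \in reflections l ->
  exists b s c, l = b ++ s :: c /\ x = inv (wprod c) * g s * wprod c.
Proof.
elim: l => [|s l IH] //=; rewrite inE => /orP [/eqP ->|/IH [b [s' [c [-> ->]]]]].
  by exists [::], s, l.
by exists (s :: b), s', c.
Qed.

Lemma uniq_reflections l : reduced l -> uniq (reflections l).
Proof.
elim: l => [|s l IH] //= red; have [_ red_l] := reduced_cat (red : reduced ([:: s] ++ l)).
rewrite IH // andbT; apply/negP => /reflections_split [b [s' [c [lE xE]]]].
have shorter : g s * wprod l = wprod (b ++ c).
  rewrite (conjE (g s)) xE lE !wprod_cat /= !mulwA mulwK.
  by rewrite -(mulwA (wprod b)) gen_sq mulw1.
have := ell_wprod (b ++ c); rewrite -shorter -wprod_cons -red lE /= !size_cat /=; lia.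
Qed.

Section Inversions.
Variable act : W -> W * bool -> W * bool.
Hypotheses (actM : forall x y p, act (x * y) p = act x (act y p))
           (act_gen : forall s p, act (g s) p = refl_pair s p)
           (act1 : forall p, act one p = p).

(* [inversion w r] records whether the reflection [r] is crossed an odd number of times
   by (any) word for [w]. *)
Definition inversion (w r : W) : bool := (act w (r, false)).2.

Lemma act_wprod l r e :
  act (wprod l) (r, e) = (wprod l * r * inv (wprod l), e (+) odd (count_mem r (reflections l))).
Proof.
elim: l => [|s l IH]; first by rewrite act1 /= mul1w invw1 mulw1 addbF.
rewrite wprod_cons actM IH act_gen /refl_pair /= invwM invw_gen !mulwA; congr (_, _).
have -> : (wprod l * r * inv (wprod l) == g s) = (inv (wprod l) * g s * wprod l == r).
  by apply/eqP/eqP=> [<-|<-]; rewrite !mulwA ?mulVw ?mulwV mul1w ?mulwVK ?mulwK.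
by rewrite oddD oddb -addbA (addbC (odd _)).
Qed.

Lemma inversion_wprod l r : inversion (wprod l) r = odd (count_mem r (reflections l)).
Proof. by rewrite /inversion act_wprod. Qed.

Lemma act_snd w r e : (act w (r, e)).2 = e (+) inversion w r.
Proof. by have [l ->] := cgenerated w; rewrite /inversion !act_wprod. Qed.

Lemma inversion_mulg w s r : inversion (w * g s) r = (r == g s) (+) inversion w (g s * r * g s).
Proof. by rewrite /inversion actM act_gen /refl_pair /= act_snd. Qed.

Lemma inversion_reduced w l r : reduced_expr w l -> inversion w r = (r \in reflections l).
Proof.
case=> <- szl; rewrite inversion_wprod count_uniq_mem ?oddb //.
by apply: uniq_reflections; rewrite /reduced szl.
Qed.

(* Otherwise [g s] and the [g s]-conjugates of the [ell w] inversions of [w] would be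
   [ell w + 1] distinct inversions of the shorter [w * g s]. *)
Lemma inversion_descent w s : ell (w * g s) < ell w -> inversion w (g s).
Proof.
move=> desc; apply/negPn/negP => /negbTE not_inv.
have [l1 red1] := reduced_expr_exists w; have [l2 red2] := reduced_expr_exists (w * g s).
have gs_notin : g s \notin reflections l1 by rewrite -(inversion_reduced _ red1) not_inv.
pose L := g s :: map (fun x => g s * x * g s) (reflections l1).
have uniqL : uniq L.
  rewrite /= -{1}(conj_gen_id s) (mem_map (@conj_gen_inj s)) gs_notin.
  by rewrite (map_inj_uniq (@conj_gen_inj s)) uniq_reflections //; case: red1 => <-.
have subL : {subset L <= reflections l2}.
  move=> y; rewrite -(inversion_reduced _ red2) inversion_mulg inE.
  case/orP=> [/eqP ->|/mapP [x x_in ->]]; first by rewrite eqxx conj_gen_id not_inv.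
  rewrite conj_genK (inversion_reduced _ red1) x_in conj_genE conj_gen_id.
  by rewrite addbT; apply/eqP => xE; rewrite -xE x_in in gs_notin.
have := uniq_leq_size uniqL subL.
by rewrite /= size_map !size_reflections (proj2 red1) (proj2 red2); lia.
Qed.

End Inversions.

Lemma exchange w s l : ell (w * g s) < ell w -> wprod l = w ->
  exists b t c, l = b ++ t :: c /\ w * g s = wprod (b ++ c).
Proof.
move=> desc wl.
have [act [actM act_gen act1]] := coxeter_action refl_pair_invol refl_pair_braid.
have := inversion_descent actM act_gen act1 desc.
rewrite -wl inversion_wprod //.
have [/reflections_split [b [t [c [lE gsE]]]] _|/count_memPn -> //] := boolP (g s \in reflections l).
exists b, t, c; split => //.
by rewrite lE gsE !wprod_cat /= !mulwA mulwK -(mulwA (wprod b)) gen_sq mulw1.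
Qed.

Lemma deletion (l : seq S) : exists2 l', {subset l' <= l} & reduced_expr (wprod l) l'.
Proof.
have [n] := ubnP (size l); elim: n l => // n IH l.
case/lastP: l => [_|l s]; first by exists [::]; [move=> x|split; rewrite //= ell1].
rewrite size_rcons ltnS => szl.
have [l' sub_l' [wl' szl']] := IH l szl.
have sub_rcons : {subset l <= rcons l s} by move=> x; rewrite mem_rcons inE orbC => ->.
case: (ell_mulg (wprod l) s) => [up|down].
  exists (rcons l' s); last by split; rewrite !wprod_rcons ?size_rcons ?wl' ?szl' ?up.
  by move=> x; rewrite !mem_rcons !inE => /orP [->|/sub_l' ->]; rewrite ?orbT.
have desc : ell (wprod l * g s) < ell (wprod l) by rewrite down.
have [b [t [c [l'E wbc]]]] := exchange desc wl'.
have [|l'' sub_l'' red_l''] := IH (b ++ c).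
  by have := ell_wprod l; rewrite -szl' l'E !size_cat /=; lia.
exists l''; last by rewrite wprod_rcons wbc.
move=> x /sub_l''; rewrite mem_cat => x_bc; apply/sub_rcons/sub_l'.
by rewrite l'E mem_cat inE; case/orP: x_bc => ->; rewrite ?orbT.
Qed.

Lemma reduced_rcons (l : seq S) s : reduced (rcons l s) -> reduced l.
Proof. by rewrite -cats1 => /reduced_cat []. Qed.

Section Parabolic.
Variable I : S -> Prop.

Lemma in_WI1 : in_WI I one.
Proof. by exists [::]. Qed.

Lemma in_WIM x y : in_WI I x -> in_WI I y -> in_WI I (x * y).
Proof.
move=> [lx [lxI <-]] [ly [lyI <-]]; exists (lx ++ ly); split; last exact: wprod_cat.
by move=> s; rewrite mem_cat => /orP [/lxI|/lyI].
Qed.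

Lemma in_WIV x : in_WI I x -> in_WI I (inv x).
Proof. by move=> [l [lI <-]]; exists (rev l); split=> [s|]; rewrite ?mem_rev ?wprod_rev //; apply: lI. Qed.

Lemma in_WI_gen s : I s -> in_WI I (g s).
Proof. by move=> Is; exists [:: s]; split=> [t|]; rewrite ?inE /= ?mulw1 // => /eqP ->. Qed.

Lemma in_WI_reduced w : in_WI I w -> exists2 l, {in l, forall s, I s} & reduced_expr w l.
Proof.
move=> [l [lI <-]]; have [l' sub_l' red] := deletion l.
by exists l' => // s /sub_l' /lI.
Qed.

Definition coset_minimal (x : W) : Prop := forall y, in_WI I y -> ell x <= ell (x * y).

Lemma coset_minimal_exists x : exists2 y, in_WI I y & coset_minimal (x * y).
Proof.
have [n [y0 [Iy0 <-]] n_min] := @ex_least (fun n => exists y, in_WI I y /\ ell (x * y) = n)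
  (ell (x * one)) (ex_intro _ one (conj in_WI1 erefl)).
exists y0 => // y Iy; rewrite -mulwA; apply: n_min; exists (y0 * y); split => //.
exact: in_WIM.
Qed.

(* Appending a letter of [I] to a reduced word inside [W_I] cannot shorten [x * y]:
   the exchange condition would either shorten [x] inside its coset or the reduced word. *)
Lemma coset_minimal_ascent x l s : coset_minimal x -> {in rcons l s, forall t, I t} ->
  reduced (rcons l s) -> ell (x * wprod l) < ell (x * wprod l * g s).
Proof.
move=> xmin /in_rconsP [lI Is] red; have [desc|//] := ell_mulg_ltgt (x * wprod l) s.
have [lx [wlx szlx]] := reduced_expr_exists x.
have lxlE : wprod (lx ++ l) = x * wprod l by rewrite wprod_cat wlx.
have [b [t [c [bcE xlsE]]]] := exchange desc lxlE.
case: (cat_cons_eq_cat (esym bcE)) => [[b' [lxE cE]]|[c' [lE bE]]].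
- have Il : in_WI I (wprod l) by exists l.
  have conj_in_WI : in_WI I (wprod l * g s * inv (wprod l)).
    by apply: in_WIM (in_WIV Il); apply: in_WIM Il (in_WI_gen Is).
  have := xmin _ conj_in_WI; rewrite !mulwA xlsE cE catA wprod_cat mulwK.
  have := ell_wprod (b ++ b'); rewrite -szlx -wlx lxE !size_cat /=; lia.
- have shorter : wprod l * g s = wprod (c' ++ c).
    by apply: (@mulwI x); rewrite mulwA xlsE bE -catA wprod_cat wlx.
  have := ell_wprod (c' ++ c); rewrite -shorter -wprod_rcons -red size_rcons lE !size_cat /=; lia.
Qed.

Lemma ell_coset_minimal_WI x y : coset_minimal x -> in_WI I y -> ell (x * y) = ell x + ell y.
Proof.
move=> xmin /in_WI_reduced [l lI [<- red]]; rewrite -red.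
elim/last_ind: l lI red => [|l s IH] lsI red; first by rewrite /= mulw1 addn0.
have := coset_minimal_ascent xmin lsI red.
have := IH (proj1 (in_rconsP lsI)) (reduced_rcons red).
rewrite wprod_rcons mulwA size_rcons; case: (ell_mulg (x * wprod l) s) => ->; lia.
Qed.

Lemma coset_minimal_XI x : in_XI I x -> coset_minimal x.
Proof.
move=> xX; have [y0 Iy0 x0min] := coset_minimal_exists x.
have xE : x = x * y0 * inv y0 by rewrite mulwK.
have [l lI [ly0 szl]] := in_WI_reduced (in_WIV Iy0).
case/lastP: l lI ly0 szl => [|l s] lsI ly0 szl; first by rewrite xE -ly0 /= mulw1.
have [lI Is] := in_rconsP lsI; have Il : in_WI I (wprod l) by exists l.
have xsE : x * g s = x * y0 * wprod l.
  by rewrite {1}xE -ly0 wprod_rcons !mulwA -mulwA gen_sq mulw1.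
have := xX s Is; rewrite xsE (ell_coset_minimal_WI x0min Il) {1}xE.
rewrite (ell_coset_minimal_WI x0min (in_WIV Iy0)) -szl size_rcons.
have := ell_wprod l; lia.
Qed.

Lemma ell_XI_WI x y : in_XI I x -> in_WI I y -> ell (x * y) = ell x + ell y.
Proof. by move/coset_minimal_XI; apply: ell_coset_minimal_WI. Qed.

Lemma par_decomp_uniq x1 y1 x2 y2 : in_XI I x1 -> in_WI I y1 -> in_XI I x2 -> in_WI I y2 ->
  x1 * y1 = x2 * y2 -> x1 = x2 /\ y1 = y2.
Proof.
move=> X1 W1 X2 W2 e.
have x2E : x2 = x1 * (y1 * inv y2) by rewrite mulwA e mulwK.
have x1E : x1 = x2 * (y2 * inv y1) by rewrite mulwA -e mulwK.
have := ell_XI_WI X1 (in_WIM W1 (in_WIV W2)); have := ell_XI_WI X2 (in_WIM W2 (in_WIV W1)).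
rewrite -x1E -x2E => ell1E ell2E.
have /ell_eq0 y12 : ell (y1 * inv y2) = 0 by lia.
have y1E : y1 = y2 by rewrite -(mulwVK y1 y2) y12 mul1w.
by split=> //; rewrite x2E y1E mulwV mulw1.
Qed.

Lemma par_decomp_exists w : exists p, par_decomp I w p.
Proof.
have [y0 Iy0 y0min] := coset_minimal_exists w.
exists (w * y0, inv y0); split=> /=; [|exact: in_WIV|by rewrite mulwK].
move=> s Is; have [desc|//] := ell_mulg_ltgt (w * y0) s.
by have := y0min _ (in_WI_gen Is); rewrite leqNgt desc.
Qed.

Lemma par_compP w : [/\ in_XI I (wup I w), in_WI I (wlo I w) & w = wup I w * wlo I w].
Proof. exact: (epsilon_spec (inhabits (one, one)) _ (par_decomp_exists w)). Qed.

Lemma par_comp_eq w x y : in_XI I x -> in_WI I y -> w = x * y -> wup I w = x /\ wlo I w = y.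
Proof.
move=> Xx Wy wE; have [Xu Wl wE'] := par_compP w.
by apply: par_decomp_uniq => //; rewrite -wE' -wE.
Qed.

End Parabolic.

Lemma in_WI_subset (I J : S -> Prop) w : (forall s, I s -> J s) -> in_WI I w -> in_WI J w.
Proof. by move=> IJ [l [lI <-]]; exists l; split=> // s /lI /IJ. Qed.

Lemma in_XI_subset (I J : S -> Prop) x : (forall s, I s -> J s) -> in_XI J x -> in_XI I x.
Proof. by move=> IJ xX s /IJ /xX. Qed.

Lemma in_XI1 (I : S -> Prop) : in_XI I one.
Proof. by move=> s _; rewrite mul1w ell1 ell_gen. Qed.

Lemma in_XI_gen (I : S -> Prop) s : ~ I s -> in_XI I (g s).
Proof.
move=> Is t It; have [/=|//] := ell_mulg_ltgt (g s) t.
rewrite ell_gen ltnS leqn0 => /eqP/ell_eq0 gst.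
have gst' : g s = g t by rewrite -(invw_eq gst) invw_gen.
by case: Is; rewrite (cgen_inj gst').
Qed.

Lemma wlo_WI (I : S -> Prop) w : in_WI I w -> wlo I w = w.
Proof. by move=> Iw; have [] := par_comp_eq (@in_XI1 I) Iw (esym (mul1w w)). Qed.

(** * Supports *)

Lemma reduced_in_WI (I : S -> Prop) l : in_WI I (wprod l) -> reduced l -> {in l, forall s, I s}.
Proof.
elim/last_ind: l => [|l s IH] Il red t //.
have Is : I s.
  apply: NNPP => Is; have := ell_XI_WI (in_XI_gen Is) (in_WIV Il).
  rewrite ell_inv -red wprod_rcons invwM invw_gen mulwA gen_sq mul1w ell_inv ell_gen size_rcons.
  by have := ell_wprod l; lia.
have Il' : in_WI I (wprod l).
  by rewrite -[wprod l]mulw1 -(gen_sq s) mulwA -wprod_rcons; apply: in_WIM Il (in_WI_gen Is).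
by rewrite mem_rcons inE => /orP [/eqP ->|]; last exact: IH Il' (reduced_rcons red) t.
Qed.

Lemma supp_in_WI (I : S -> Prop) w : in_WI I w -> forall s, supp w s -> I s.
Proof. by move=> Iw s [l [[wl szl] sl]]; subst w; apply: (reduced_in_WI Iw). Qed.

Lemma in_WI_supp (w : W) : in_WI (supp w) w.
Proof. by have [l [wl szl]] := reduced_expr_exists w; exists l; split=> // s sl; exists l. Qed.

Lemma supp_mul (x y : W) : ell (x * y) = ell x + ell y ->
  (forall s, supp x s -> supp (x * y) s) /\ (forall s, supp y s -> supp (x * y) s).
Proof.
move=> xy_add.
have [lx [wlx szlx]] := reduced_expr_exists x; have [ly [wly szly]] := reduced_expr_exists y.
split=> s [l [[wl szl] sl]].
  exists (l ++ ly); split; last by rewrite mem_cat sl.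
  by split; rewrite ?wprod_cat ?wl ?wly // size_cat xy_add szl szly.
exists (lx ++ l); split; last by rewrite mem_cat sl orbT.
by split; rewrite ?wprod_cat ?wl ?wlx // size_cat xy_add szl szlx.
Qed.

Lemma supp_wlo (I : S -> Prop) w s : supp (wlo I w) s -> supp w s.
Proof.
have [Xu Wl wE] := par_compP I w.
by have [_ sub] := supp_mul (ell_XI_WI Xu Wl); rewrite -wE in sub; apply: sub.
Qed.

Lemma cle_wlo (I : S -> Prop) w : cle (wlo I w) w.
Proof.
have [Xu Wl wE] := par_compP I w.
by have [] := par_comp_eq (in_XI_subset (supp_in_WI Wl) Xu) (in_WI_supp (wlo I w)) wE.
Qed.

Lemma wlo_wlo (I J : S -> Prop) w : (forall s, I s -> J s) -> wlo I (wlo J w) = wlo I w.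
Proof.
move=> IJ; have [Xa Wb wE] := par_compP J w; have [Xc Wd bE] := par_compP I (wlo J w).
set b := wlo J w in Wb wE bE Xc Wd *.
set c := wup I b in Xc bE *; set d := wlo I b in Wd bE *.
have cE : c = b * inv d by rewrite bE mulwK.
have Jc : in_WI J c by rewrite cE; apply: in_WIM Wb (in_WIV (in_WI_subset IJ Wd)).
have Xac : in_XI I (wup J w * c).
  move=> s Is; rewrite -mulwA !(ell_XI_WI Xa) ?ltn_add2l ?Xc //.
  exact: in_WIM Jc (in_WI_gen (IJ s Is)).
by have [] := par_comp_eq Xac Wd (_ : w = _ * c * d); rewrite // -mulwA -bE.
Qed.

Lemma supp_descent (y : W) s : ell (y * g s) < ell y -> supp y s.
Proof.
move=> desc; have [l [wl szl]] := reduced_expr_exists (y * g s).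
exists (rcons l s); split; last by rewrite mem_rcons inE eqxx.
split; first by rewrite wprod_rcons wl -mulwA gen_sq mulw1.
by rewrite size_rcons szl; case: (ell_mulg y s) desc => ->; lia.
Qed.

Lemma descent_mul (x y : W) s : ell (x * y) = ell x + ell y -> ell (y * g s) < ell y ->
  ell (x * y * g s) < ell (x * y).
Proof.
move=> xy_add desc; rewrite xy_add -mulwA (leq_ltn_trans (ell_mul _ _)) //.
by rewrite ltn_add2l.
Qed.

Lemma descent_wlo (I : S -> Prop) x y s : in_XI I x -> in_WI I y -> I s ->
  ell (x * y * g s) < ell (x * y) -> ell (y * g s) < ell y.
Proof.
move=> Xx Wy Is; have [//|asc] := ell_mulg_ltgt y s.
rewrite -mulwA !(ell_XI_WI Xx) ?ltn_add2l ?ltnNge ?(ltnW asc) //.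
exact: in_WIM Wy (in_WI_gen Is).
Qed.

Section Covers.
Variables u v : W.
Hypothesis lt_uv : clt u v.
Local Notation I := (supp u).

(* [vI] is [v^(S(u))]; since [u <= v], [v_(S(u)) = u]. *)
Definition vI : W := wup I v.

Definition cover_of (s : S) : W := wlo (fun r => I r \/ r = s) v.

Lemma vIE : v = vI * u.
Proof. by have [_ _ vE] := par_compP I v; rewrite {1}vE (proj1 lt_uv). Qed.

Lemma in_XI_vI : in_XI I vI.
Proof. by case: (par_compP I v). Qed.

Lemma wlo_v (J : S -> Prop) : (forall r, I r -> J r) -> wlo J v = wlo J vI * u.
Proof.
move=> IJ; have [Xa Wb vIE'] := par_compP J vI.
have vE : v = wup J vI * (wlo J vI * u) by rewrite mulwA -vIE' -vIE.
by have [] := par_comp_eq Xa (in_WIM Wb (in_WI_subset IJ (in_WI_supp u))) vE.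
Qed.

Lemma in_XI_wlo_vI (J : S -> Prop) : in_XI I (wlo J vI).
Proof.
have [Xa Wb vIE'] := par_compP J vI.
move=> s Is; have [desc|//] := ell_mulg_ltgt (wlo J vI) s.
have := descent_mul (ell_XI_WI Xa Wb) desc; rewrite -vIE'.
have := in_XI_vI Is; lia.
Qed.

Section DescentCover.
Variable s : S.
Hypothesis desc : ell (vI * g s) < ell vI.
Local Notation Js := (fun r => I r \/ r = s).

Lemma not_supp_u : ~ I s.
Proof. by move=> Is; have := in_XI_vI Is; rewrite ltnNge (ltnW desc). Qed.

Lemma cover_ofE : cover_of s = wlo Js vI * u.
Proof. by apply: wlo_v => r; left. Qed.

Lemma supp_cover_of : supp (cover_of s) s.
Proof.
have [Xa Wb vIE'] := par_compP Js vI.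
have [sub _] := supp_mul (ell_XI_WI (in_XI_wlo_vI Js) (in_WI_supp u)).
rewrite cover_ofE; apply/sub/supp_descent; apply: descent_wlo Xa Wb _ _; first by right.
by rewrite -vIE'.
Qed.

Lemma in_WI_cover_of : in_WI Js (cover_of s).
Proof. by case: (par_compP Js v). Qed.

Lemma lt_u_cover_of : clt u (cover_of s).
Proof.
split; first by rewrite /cle cover_ofE; have [] := par_comp_eq (in_XI_wlo_vI Js) (in_WI_supp u) erefl.
by move=> uE; apply: not_supp_u; rewrite {1}uE; exact: supp_cover_of.
Qed.

(* An element strictly between [u] and [cover_of s] has a support strictly between
   [S(u)] and [S(u) + s], which is impossible. *)
Lemma cover_of_covers : covers_in u v (cover_of s).
Proof.
split; [exact: lt_u_cover_of|split; first exact: cle_wlo].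
move=> [z [[uz u_ne_z] [zc z_ne_c]]].
have supp_zc r : supp z r -> supp (cover_of s) r by rewrite -{1}zc; apply: supp_wlo.
have supp_uz r : I r -> supp z r by rewrite -{1}uz; apply: supp_wlo.
have [zs|zs] := classic (supp z s).
  apply: z_ne_c; rewrite -zc wlo_WI //.
  by apply: in_WI_subset in_WI_cover_of => r [/supp_uz|->].
apply: u_ne_z; rewrite -uz wlo_WI //; apply: in_WI_subset (in_WI_supp z) => r zr.
by case: (supp_in_WI in_WI_cover_of (supp_zc r zr)) => // rs; rewrite rs in zr.
Qed.

End DescentCover.

(* A cover [z] of [u] is [v_(S(z))]; the last letter [s] of a reduced word of
   [vI_(S(z))] is a descent of [vI], and [cover_of s] lies between [u] and [z]. *)
Lemma covers_in_is_cover_of z : covers_in u v z -> exists2 s, ell (vI * g s) < ell vI & z = cover_of s.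
Proof.
move=> [[uz u_ne_z] [zv no_between]].
have supp_uz r : I r -> supp z r by rewrite -{1}uz; apply: supp_wlo.
have zE : z = wlo (supp z) vI * u by rewrite -(wlo_v supp_uz) zv.
have [Xa Wb vIE'] := par_compP (supp z) vI.
have [|l [s [wls szls]]] := @reduced_rcons_exists (wlo (supp z) vI).
  by move=> b1; apply: u_ne_z; rewrite zE b1 mul1w.
have descb : ell (wlo (supp z) vI * g s) < ell (wlo (supp z) vI).
  by rewrite -wls ell_rcons_lt // /reduced wls.
have zs : supp z s by apply: (supp_in_WI Wb); exact: supp_descent descb.
exists s; first by rewrite vIE'; apply: descent_mul (ell_XI_WI Xa Wb) descb.
have cE : cover_of s = wlo (fun r => I r \/ r = s) z by rewrite /cover_of -zv wlo_wlo // => r [/supp_uz|->].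
apply: NNPP => z_ne_c; apply: no_between; exists (cover_of s); split.
  by apply: lt_u_cover_of; rewrite vIE'; apply: descent_mul (ell_XI_WI Xa Wb) descb.
by split; [rewrite cE; exact: cle_wlo|move=> /esym].
Qed.

Lemma cover_of_inj s t : ell (vI * g s) < ell vI -> ell (vI * g t) < ell vI ->
  cover_of s = cover_of t -> s = t.
Proof.
move=> descs desct st; have := supp_cover_of descs; rewrite st.
by case/(supp_in_WI (in_WI_cover_of t)) => // /(not_supp_u descs).
Qed.

End Covers.

End CoxeterGroup.

Theorem mainTheorem11 (C : coxeter_system) (u v : cW C) :
  clt u v ->
  exists l : list (cW C),
    List.NoDup l /\
    (forall x, List.In x l <-> covers_in u v x) /\
    List.length l = #|Des (wup (supp u) v)|.
Proof.
move=> lt_uv; set D := Des (wup (supp u) v).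
have inD s : (s \in D) = (ell (cmul (vI u v) (cgen s)) < ell (vI u v)) by rewrite inE.
exists (map (cover_of u v) (enum D)); split; [|split].
- apply/uniq_NoDup; rewrite map_inj_in_uniq ?enum_uniq // => s t.
  by rewrite !mem_enum !inD; apply: cover_of_inj.
- move=> x; rewrite In_mem; split.
    by case/mapP=> s; rewrite mem_enum inD => desc ->; apply: cover_of_covers.
  by case/(covers_in_is_cover_of lt_uv) => s desc ->; rewrite map_f // mem_enum inD.
- by rewrite length_size size_map cardE.
Qed.
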